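(* Let $S=\{2N+\frac{2k+1}{3^n} : N,k\in\mathbb{Z},\ n\in\mathbb{N},\ |2k+1|<3^n\}$. Let $G$ be the graph with vertex set $\mathbb{R}$ in which two vertices $a,b\in\mathbb{R}$ are adjacent if and only if $|a-b|\in S$. Then $G$ contains no cycle of odd length; that is, $G$ is bipartite.
   Context: $\mathbb{N}=\{1,2,3,\dots\}$. A cycle of length $m$ in $G$ is a sequence of $m$ distinct vertices $v_1,\dots,v_m$ with $v_i$ adjacent to $v_{i+1}$ for $1\le i<m$ and $v_m$ adjacent to $v_1$. *)

From Stdlib Require Import Reals ZArith Arith Lia Lra.
Open Scope R_scope.

Definition S_set (x : R) : Prop :=
  exists (N k : Z) (n : nat),
    (1 <= n)%nat /\
    Rabs (2 * IZR k + 1) < 3 ^ n /\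
    x = 2 * IZR N + (2 * IZR k + 1) / 3 ^ n.

Definition adj (a b : R) : Prop := S_set (Rabs (a - b)).

Definition is_cycle (m : nat) (v : nat -> R) : Prop :=
  (1 <= m)%nat /\
  (forall i j, (i < m)%nat -> (j < m)%nat -> v i = v j -> i = j) /\
  (forall i, (i + 1 < m)%nat -> adj (v i) (v (i + 1)%nat)) /\
  adj (v (m - 1)%nat) (v 0%nat).

(* Every element of S is a/3^n with a odd, because 3^n is odd.  Clearing
   denominators shows that the parity of such a numerator adds mod 2 along
   sums, so along a walk of length j in G the displacement has numerator of
   parity j.  Closing a cycle of odd length would write 0 as a/3^n with a odd. *)

From Stdlib Require Import Reals ZArith Arith Lia Lra.
Open Scope R_scope.

Definition triadic_parity (b : bool) (x : R) : Prop :=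
  exists (a : Z) (n : nat), Z.odd a = b /\ x = IZR a / 3 ^ n.

Lemma Z_odd_pow3 (p : nat) : Z.odd (3 ^ Z.of_nat p) = true.
Proof.
  induction p as [|p IH]; [reflexivity|].
  rewrite Nat2Z.inj_succ, Z.pow_succ_r, Z.odd_mul, IH; [reflexivity | lia].
Qed.

Lemma pow3_neq0 (n : nat) : 3 ^ n <> 0.
Proof. apply pow_nonzero; lra. Qed.

Lemma triadic_parity_add (b c : bool) (x y : R) :
  triadic_parity b x -> triadic_parity c y -> triadic_parity (xorb b c) (x + y).
Proof.
  intros [a [n [Ha ->]]] [a' [n' [Ha' ->]]].
  exists (a * 3 ^ Z.of_nat n' + a' * 3 ^ Z.of_nat n)%Z, (n + n')%nat; split.
  - rewrite Z.odd_add, !Z.odd_mul, !Z_odd_pow3, Ha, Ha'.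
    destruct b, c; reflexivity.
  - rewrite plus_IZR, !mult_IZR, <- !pow_IZR, pow_add.
    field; split; apply pow3_neq0.
Qed.

Lemma triadic_parity_opp (b : bool) (x : R) :
  triadic_parity b x -> triadic_parity b (- x).
Proof.
  intros [a [n [Ha ->]]]. exists (- a)%Z, n; split.
  - rewrite Z.odd_opp; exact Ha.
  - rewrite opp_IZR; field; apply pow3_neq0.
Qed.

Lemma triadic_parity_abs (b : bool) (x : R) :
  triadic_parity b (Rabs x) -> triadic_parity b x.
Proof.
  unfold Rabs; destruct (Rcase_abs x); [|easy].
  intros H; rewrite <- (Ropp_involutive x); apply triadic_parity_opp, H.
Qed.

Lemma triadic_parity_0 : triadic_parity false 0.
Proof. exists 0%Z, 0%nat; split; [reflexivity | simpl; field]. Qed.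

Lemma not_triadic_parity_odd_0 : ~ triadic_parity true 0.
Proof.
  intros [a [n [Ha Hx]]].
  assert (Ha0 : IZR a = 0).
  { replace (IZR a) with (IZR a / 3 ^ n * 3 ^ n) by (field; apply pow3_neq0).
    rewrite <- Hx; ring. }
  apply eq_IZR_R0 in Ha0; subst; discriminate.
Qed.

Lemma S_set_triadic_odd (x : R) : S_set x -> triadic_parity true x.
Proof.
  intros [N [k [n [_ [_ ->]]]]].
  exists (2 * N * 3 ^ Z.of_nat n + (2 * k + 1))%Z, n; split.
  - rewrite Z.odd_add, !Z.odd_mul, Z.odd_add, Z.odd_mul, Z_odd_pow3; reflexivity.
  - rewrite !plus_IZR, !mult_IZR, <- pow_IZR; field; apply pow3_neq0.
Qed.

Lemma adj_triadic_odd (a b : R) : adj a b -> triadic_parity true (b - a).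
Proof.
  intros Hab; apply S_set_triadic_odd in Hab.
  replace (b - a) with (- (a - b)) by ring.
  apply triadic_parity_opp, triadic_parity_abs, Hab.
Qed.

Lemma walk_triadic_parity (v : nat -> R) (j : nat) :
  (forall i, (i < j)%nat -> adj (v i) (v (i + 1)%nat)) ->
  triadic_parity (Nat.odd j) (v j - v 0%nat).
Proof.
  induction j as [|j IH]; intros Hwalk.
  - replace (v 0%nat - v 0%nat) with 0 by ring; exact triadic_parity_0.
  - replace (v (S j) - v 0%nat) with ((v j - v 0%nat) + (v (j + 1)%nat - v j))
      by (rewrite Nat.add_1_r; ring).
    replace (Nat.odd (S j)) with (xorb (Nat.odd j) true)
      by (rewrite Nat.odd_succ, <- Nat.negb_odd; destruct (Nat.odd j); reflexivity).
    apply triadic_parity_add.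
    + apply IH; intros i Hi; apply Hwalk; lia.
    + apply adj_triadic_odd, Hwalk; lia.
Qed.

Theorem mainTheorem2 :
  forall (m : nat) (v : nat -> R), Nat.Odd m -> ~ is_cycle m v.
Proof.
  intros m v [k ->] [_ [_ [Hstep Hlast]]].
  replace (2 * k + 1 - 1)%nat with (2 * k)%nat in Hlast by lia.
  assert (Hpath : triadic_parity false (v (2 * k)%nat - v 0%nat)).
  { replace false with (Nat.odd (2 * k)) by (rewrite Nat.odd_mul; reflexivity).
    apply walk_triadic_parity; intros i Hi; apply Hstep; lia. }
  apply not_triadic_parity_odd_0.
  replace 0 with ((v (2 * k)%nat - v 0%nat) + (v 0%nat - v (2 * k)%nat)) by ring.
  apply (triadic_parity_add false true), adj_triadic_odd; assumption.
Qed.
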